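(* Let $N\ge1$, $n,m\ge1$, $\kappa>0$, and let $\{(U_i,V_i)\}_{i=1}^N$ be a solution of $$\dot U_j=\frac{\kappa}{N}\sum_{k=1}^N\big(\langle V_j,V_k\rangle_FU_k-\langle V_k,V_j\rangle_FU_jU_k^\dagger U_j\big),\qquad \dot V_j=\frac{\kappa}{N}\sum_{k=1}^N\big(\langle U_j,U_k\rangle_FV_k-\langle U_k,U_j\rangle_FV_jV_k^\dagger V_j\big),$$ with $(U_j,V_j)(0)\in\mathbf U(n)\times\mathbf U(m)$. Then $\mathcal E(U,V):=1-\frac1{N^2}\sum_{i,j=1}^N\langle U_i,U_j\rangle_F\langle V_i,V_j\rangle_F$ satisfies, for $t>0$, $$\frac{d}{dt}\mathcal E(U,V)=-\frac{1}{\kappa N}\sum_{j=1}^N\big(\|\dot U_j\|_F^2+\|\dot V_j\|_F^2\big).$$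
   Context: $\langle A,B\rangle_F=\mathrm{tr}(A^\dagger B)$, $\|A\|_F=\sqrt{\langle A,A\rangle_F}$; $\mathbf U(n)$ denotes the unitary group. *)

From HB Require Import structures.
From mathcomp Require Import all_boot all_order all_algebra.
From mathcomp Require Import all_classical all_reals all_analysis.
From mathcomp Require Import complex.
Set Implicit Arguments. Unset Strict Implicit. Unset Printing Implicit Defensive.
Import Order.TTheory GRing.Theory Num.Theory.
Local Open Scope ring_scope.
Local Open Scope complex_scope.
Import numFieldNormedType.Exports.
Local Open Scope classical_set_scope.

Section Defs.
Variable R : realType.

Definition adj (p q : nat) (A : 'M[R[i]]_(p, q)) : 'M[R[i]]_(q, p) :=
  (map_mx (@conjc R) A)^T.

Definition frob (p : nat) (A B : 'M[R[i]]_p) : R[i] := \tr (adj A *m B).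

(* ||A||_F^2 = <A,A>_F  (which is a nonnegative real; we take its real part) *)
Definition frob_norm2 (p : nat) (A : 'M[R[i]]_p) : R := complex.Re (frob A A).

Definition unitary (p : nat) (A : 'M[R[i]]_p) : Prop := adj A *m A = 1%:M.

Definition cderiv (f : R -> R[i]) (t : R) (d : R[i]) : Prop :=
  is_derive t 1 (fun s => complex.Re (f s)) (complex.Re d) /\
  is_derive t 1 (fun s => complex.Im (f s)) (complex.Im d).

Definition mx_deriv (p : nat) (X : R -> 'M[R[i]]_p) (t : R) (D : 'M[R[i]]_p) : Prop :=
  forall a b, cderiv (fun s => X s a b) t (D a b).

Definition mx_cont_nonneg (p : nat) (X : R -> 'M[R[i]]_p) : Prop :=
  forall a b,
    {within `[0, +oo[, continuous (fun s => complex.Re (X s a b))} /\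
    {within `[0, +oo[, continuous (fun s => complex.Im (X s a b))}.

Definition flow_rhs (N p q : nat) (kappa : R)
  (X : 'I_N -> R -> 'M[R[i]]_p) (Y : 'I_N -> R -> 'M[R[i]]_q)
  (j : 'I_N) (t : R) : 'M[R[i]]_p :=
  (kappa / N%:R)%:C *:
    \sum_(k < N) (frob (Y j t) (Y k t) *: X k t
                  - frob (Y k t) (Y j t) *: (X j t *m adj (X k t) *m X j t)).

Definition energy (N p q : nat)
  (X : 'I_N -> R -> 'M[R[i]]_p) (Y : 'I_N -> R -> 'M[R[i]]_q) (t : R) : R[i] :=
  1 - (1 / (N%:R ^+ 2))%:C *
      \sum_(a < N) \sum_(b < N) (frob (X a t) (X b t) * frob (Y a t) (Y b t)).

End Defs.

From mathcomp Require Import all_boot all_order all_algebra.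
From mathcomp Require Import all_classical all_reals all_analysis.
From mathcomp Require Import complex.
From mathcomp Require Import ring lra.
Import Order.TTheory GRing.Theory Num.Theory.
Import numFieldNormedType.Exports.
Import Normc.
Set Implicit Arguments. Unset Strict Implicit. Unset Printing Implicit Defensive.
Local Open Scope ring_scope.
Local Open Scope complex_scope.
Local Open Scope classical_set_scope.

(* First, each U_j stays unitary.  Put M_j = sum_k <V_j,V_k> U_k and
   the gain P_j = (kappa/N) M_j^dagger U_j; then U_j' = (kappa/N) (M_j - U_j M_j^dagger U_j),
   and the defect Z_j = 1 - U_j^dagger U_j solves the linear equation
   Z_j' = -(Z_j P_j + P_j^dagger Z_j).  As P is bounded on every [0, T] by continuity,
   Phi = sum_j ||Z_j||_F^2 satisfies Phi' <= C Phi there, and Phi(0) = 0, so Phi = 0 by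
   Gronwall; likewise for V_j.
   Second, by the product rule dE/dt = -(1/N^2) sum_j (2 Re <U_j', M_j> + 2 Re <V_j', M'_j>)
   with M'_j the analogous sum for V.  For unitary U, M |-> U M^dagger U preserves the
   Frobenius norm, hence 2 Re <D, M> = ||D||^2 for D = M - U M^dagger U, which turns
   2 Re <U_j', M_j> into (N/kappa) ||U_j'||^2. *)

Section ComplexArith.
Context {R : rcfType}.
Implicit Types x y : R[i].

Lemma Re_mulc x y :
  complex.Re (x * y) = complex.Re x * complex.Re y - complex.Im x * complex.Im y.
Proof. by case: x => a b; case: y. Qed.

Lemma Im_mulc x y :
  complex.Im (x * y) = complex.Re x * complex.Im y + complex.Im x * complex.Re y.
Proof. by case: x => a b; case: y. Qed.

(* Inside ring_scope a bare [x^*] is [Num.conj x]; [%C] selects [conjc], the conjugation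
   used by [adj]. *)
Lemma Re_conjc x : complex.Re x^*%C = complex.Re x. Proof. by case: x. Qed.

Lemma Im_conjc x : complex.Im x^*%C = - complex.Im x. Proof. by case: x. Qed.

Lemma normc_ge0 x : 0 <= normc x.
Proof. by case: x => a b; exact: sqrtr_ge0. Qed.

Lemma normc_sqrE x : normc x ^+ 2 = complex.Re x ^+ 2 + complex.Im x ^+ 2.
Proof. by case: x => a b; rewrite /= sqr_sqrtr // addr_ge0 ?sqr_ge0. Qed.

Lemma normc_conj x : normc x^*%C = normc x.
Proof. by case: x => a b; rewrite /= sqrrN. Qed.

Lemma normc_ge_absRe x : `|complex.Re x| <= normc x.
Proof.
case: x => a b /=; rewrite -sqrtr_sqr ler_sqrt ?lerDl ?sqr_ge0 //.
by rewrite addr_ge0 ?sqr_ge0.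
Qed.

Lemma conjc_mul_normc x : x^*%C * x = (normc x ^+ 2)%:C.
Proof.
case: x => a b; rewrite normc_sqrE /=; apply/eqP.
by rewrite eq_complex /= mulNr opprK -!expr2 eqxx /= mulrC mulNr subrr.
Qed.

Lemma ler_normc_sum n (F : 'I_n -> R[i]) : normc (\sum_i F i) <= \sum_i normc (F i).
Proof.
elim/big_ind2: _ => [|x1 y1 x2 y2 le1 le2|//]; first by rewrite normc0.
exact: le_trans (le_normcD _ _) (lerD le1 le2).
Qed.

End ComplexArith.

Section ComplexDerivative.
Context {R : realType}.
Implicit Types f g : R -> R[i].

Lemma cderiv_eq f t d d' : cderiv f t d -> d = d' -> cderiv f t d'.
Proof. by move=> ? <-. Qed.

Lemma cderiv_cst (c : R[i]) t : cderiv (fun=> c) t 0.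
Proof. by split; exact: is_derive_cst. Qed.

Lemma cderivD f g t df dg : cderiv f t df -> cderiv g t dg ->
  cderiv (fun s => f s + g s) t (df + dg).
Proof.
move=> [? ?] [? ?]; split; rewrite raddfD; under eq_fun do rewrite raddfD;
  exact: is_deriveD.
Qed.

Lemma cderivN f t df : cderiv f t df -> cderiv (fun s => - f s) t (- df).
Proof.
move=> [? ?]; split; rewrite raddfN; under eq_fun do rewrite raddfN;
  exact: is_deriveN.
Qed.

Lemma cderivB f g t df dg : cderiv f t df -> cderiv g t dg ->
  cderiv (fun s => f s - g s) t (df - dg).
Proof. by move=> ? ?; apply: cderivD => //; exact: cderivN. Qed.

Lemma cderivM f g t df dg : cderiv f t df -> cderiv g t dg ->
  cderiv (fun s => f s * g s) t (df * g t + f t * dg).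
Proof.
move=> [fr fi] [gr gi]; split.
- under eq_fun do rewrite Re_mulc.
  apply: is_derive_eq (is_deriveB (is_deriveM fr gr) (is_deriveM fi gi)) _.
  by rewrite [RHS]raddfD /= !Re_mulc /GRing.scale /=; ring.
- under eq_fun do rewrite Im_mulc.
  apply: is_derive_eq (is_deriveD (is_deriveM fr gi) (is_deriveM fi gr)) _.
  by rewrite [RHS]raddfD /= !Im_mulc /GRing.scale /=; ring.
Qed.

Lemma cderivJ f t df : cderiv f t df -> cderiv (fun s => (f s)^*%C) t df^*%C.
Proof.
move=> [? ?]; split; rewrite ?Re_conjc ?Im_conjc.
  by under eq_fun do rewrite Re_conjc.
by under eq_fun do rewrite Im_conjc; exact: is_deriveN.
Qed.

Lemma cderiv_sum n (F : 'I_n -> R -> R[i]) dF t :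
  (forall i, cderiv (F i) t (dF i)) ->
  cderiv (fun s => \sum_(i < n) F i s) t (\sum_(i < n) dF i).
Proof.
move=> dFi; rewrite -[fun s => _]fct_sumE.
elim/big_ind2: _ => [|f df g dg|//]; [exact: cderiv_cst | exact: cderivD].
Qed.

End ComplexDerivative.

Section ComplexContinuity.
Context {R : realType} {T : topologicalType}.
Implicit Types f g : T -> R[i].

Definition ccontinuous f :=
  continuous (fun s => complex.Re (f s)) /\ continuous (fun s => complex.Im (f s)).

Lemma ccontinuous_cst (c : R[i]) : ccontinuous (fun=> c).
Proof. by split; exact: cst_continuous. Qed.

Lemma ccontinuousD f g : ccontinuous f -> ccontinuous g ->
  ccontinuous (fun s => f s + g s).
Proof.
move=> [fr fi] [gr gi]; split=> x.
  by under eq_fun do rewrite raddfD; apply: continuousD; [exact: fr | exact: gr].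
by under eq_fun do rewrite raddfD; apply: continuousD; [exact: fi | exact: gi].
Qed.

Lemma ccontinuousN f : ccontinuous f -> ccontinuous (fun s => - f s).
Proof.
move=> [fr fi]; split=> x.
  by under eq_fun do rewrite raddfN; apply: continuousN; exact: fr.
by under eq_fun do rewrite raddfN; apply: continuousN; exact: fi.
Qed.

Lemma ccontinuousB f g : ccontinuous f -> ccontinuous g ->
  ccontinuous (fun s => f s - g s).
Proof. by move=> ? ?; apply: ccontinuousD => //; exact: ccontinuousN. Qed.

Lemma ccontinuousM f g : ccontinuous f -> ccontinuous g ->
  ccontinuous (fun s => f s * g s).
Proof.
move=> [fr fi] [gr gi]; split=> x.
  rewrite (funext (fun s => Re_mulc (f s) (g s))).
  exact: continuousB (continuousM (fr x) (gr x)) (continuousM (fi x) (gi x)).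
rewrite (funext (fun s => Im_mulc (f s) (g s))).
exact: continuousD (continuousM (fr x) (gi x)) (continuousM (fi x) (gr x)).
Qed.

Lemma ccontinuousJ f : ccontinuous f -> ccontinuous (fun s => (f s)^*%C).
Proof.
move=> [fr fi]; split=> x; first by under eq_fun do rewrite Re_conjc; exact: fr.
by under eq_fun do rewrite Im_conjc; apply: continuousN; exact: fi.
Qed.

Lemma ccontinuous_sum n (F : 'I_n -> T -> R[i]) :
  (forall i, ccontinuous (F i)) -> ccontinuous (fun s => \sum_(i < n) F i s).
Proof.
move=> Fc; rewrite -[fun s => _]fct_sumE.
by elim/big_ind: _ => [|f g|//]; [exact: ccontinuous_cst | exact: ccontinuousD].
Qed.

Lemma continuous_normc f : ccontinuous f -> continuous (fun s => normc (f s)).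
Proof.
move=> [fr fi] x.
have -> : (fun s => normc (f s)) = (fun s =>
    Num.sqrt (complex.Re (f s) * complex.Re (f s) + complex.Im (f s) * complex.Im (f s))).
  by apply/funext => s; case: (f s) => a b; rewrite /= !expr2.
exact: continuous_comp
  (continuousD (continuousM (fr x) (fr x)) (continuousM (fi x) (fi x))) (@sqrt_continuous R _).
Qed.

End ComplexContinuity.

Lemma segment_bounded {R : realType} (I : finType) (f : I -> R -> R) (a b : R) :
  a <= b -> (forall i, {within `[a, b], continuous (f i)}) ->
  exists K, forall i s, s \in `[a, b]%R -> f i s <= K.
Proof.
move=> ab fc.
have gc : {within `[a, b], continuous (fun s => \sum_i `|f i s|)}.
  apply: continuous_big => [|i _]; first exact: add_continuous.
  by move=> x; apply: continuous_comp; [exact: fc | exact: norm_continuous].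
have [c _ cmax] := EVT_max ab gc.
exists (\sum_i `|f i c|) => i s sab; apply: le_trans (cmax s sab).
rewrite (bigD1 i) //= (le_trans (ler_norm _)) // lerDl.
by apply: sumr_ge0 => ? _.
Qed.

Lemma gronwall_le0 {R : realType} (f df : R -> R) (K T : R) : 0 < T ->
  {within `[0, T], continuous f} -> f 0 = 0 ->
  (forall s, s \in `]0, T[%R -> is_derive s 1 f (df s)) ->
  (forall s, s \in `]0, T[%R -> df s <= K * f s) -> f T <= 0.
Proof.
move=> T0 fc f0 fd fb.
(* Mean value theorem for f(s) e^(-K s), whose derivative e^(-K s) (f' - K f) is <= 0. *)
pose h s := expR (- K * s).
have hd (s : R) : is_derive s 1 h (expR (- K * s) * - K).
  apply: is_derive1_comp; apply: is_derive_eq (is_deriveZ (- K) (@is_derive_id _ R^o s 1)) _.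
  by rewrite /GRing.scale /= mulr1.
have hc : continuous h.
  by move=> s; apply/differentiable_continuous/derivable1_diffP; case: (hd s).
have hcT : {within `[0, T], continuous h} := continuous_subspaceT hc.
have [c cT] := MVT T0 (fun s sT => is_deriveM (fd s sT) (hd s))
  (fun s => continuousM (fc s) (hcT s)).
have -> : f c *: (expR (- K * c) * - K) + h c *: df c = h c * (df c - K * f c).
  by rewrite /GRing.scale /= /h; ring.
rewrite mulrfctE f0 mul0r !subr0 => eT.
have : f T * h T <= 0.
  rewrite eT /h mulr_le0_ge0 ?(ltW T0) // mulr_ge0_le0 ?expR_ge0 // subr_le0.
  exact: fb.
by rewrite pmulr_lle0 // expR_gt0.
Qed.

Section Adjoint.
Context {R : realType}.
Implicit Types (p q r : nat).

Lemma adjE p q (A : 'M[R[i]]_(p, q)) i j : adj A i j = (A j i)^*%C.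
Proof. by rewrite !mxE. Qed.

Lemma adjK p q (A : 'M[R[i]]_(p, q)) : adj (adj A) = A.
Proof. by apply/matrixP => i j; rewrite !adjE conjcK. Qed.

Lemma adjD p q (A B : 'M[R[i]]_(p, q)) : adj (A + B) = adj A + adj B.
Proof. by apply/matrixP => i j; rewrite !mxE rmorphD. Qed.

Lemma adjN p q (A : 'M[R[i]]_(p, q)) : adj (- A) = - adj A.
Proof. by apply/matrixP => i j; rewrite !mxE rmorphN. Qed.

Lemma adjB p q (A B : 'M[R[i]]_(p, q)) : adj (A - B) = adj A - adj B.
Proof. by rewrite adjD adjN. Qed.

Lemma adj_scale p q (c : R[i]) (A : 'M[R[i]]_(p, q)) : adj (c *: A) = c^*%C *: adj A.
Proof. by apply/matrixP => i j; rewrite !mxE rmorphM. Qed.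

Lemma adj_sum p q n (F : 'I_n -> 'M[R[i]]_(p, q)) :
  adj (\sum_(k < n) F k) = \sum_(k < n) adj (F k).
Proof.
by apply/matrixP => i j; rewrite adjE !summxE rmorph_sum; apply: eq_bigr => k _; rewrite adjE.
Qed.

Lemma adjM p q r (A : 'M[R[i]]_(p, q)) (B : 'M[R[i]]_(q, r)) :
  adj (A *m B) = adj B *m adj A.
Proof. by rewrite /adj map_mxM trmx_mul. Qed.

End Adjoint.

Section Frobenius.
Context {R : realType} {p : nat}.
Implicit Types A B : 'M[R[i]]_p.

Lemma frobE A B : frob A B = \sum_i \sum_k (A k i)^*%C * B k i.
Proof. by apply: eq_bigr => i _; rewrite mxE; apply: eq_bigr => k _; rewrite adjE. Qed.

Lemma frobJ A B : (frob A B)^*%C = frob B A.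
Proof.
rewrite !frobE rmorph_sum; apply: eq_bigr => i _; rewrite rmorph_sum.
by apply: eq_bigr => k _; rewrite rmorphM /= conjcK mulrC.
Qed.

Lemma frobDr A B B' : frob A (B + B') = frob A B + frob A B'.
Proof. by rewrite /frob mulmxDr mxtraceD. Qed.

Lemma frobZr A B c : frob A (c *: B) = c * frob A B.
Proof. by rewrite /frob -scalemxAr mxtraceZ. Qed.

Lemma frobNr A B : frob A (- B) = - frob A B.
Proof. by rewrite -scaleN1r frobZr mulN1r. Qed.

Lemma frobBr A B B' : frob A (B - B') = frob A B - frob A B'.
Proof. by rewrite frobDr frobNr. Qed.

Lemma frob_sumr A n (F : 'I_n -> 'M[R[i]]_p) :
  frob A (\sum_(k < n) F k) = \sum_(k < n) frob A (F k).
Proof. by rewrite /frob mulmx_sumr raddf_sum. Qed.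

Lemma frobDl A A' B : frob (A + A') B = frob A B + frob A' B.
Proof. by rewrite /frob adjD mulmxDl mxtraceD. Qed.

Lemma frobZl A B c : frob (c *: A) B = c^*%C * frob A B.
Proof. by rewrite /frob adj_scale -scalemxAl mxtraceZ. Qed.

Lemma frobNl A B : frob (- A) B = - frob A B.
Proof. by rewrite /frob adjN mulNmx raddfN. Qed.

Lemma frobBl A A' B : frob (A - A') B = frob A B - frob A' B.
Proof. by rewrite frobDl frobNl. Qed.

Lemma frob_suml B n (F : 'I_n -> 'M[R[i]]_p) :
  frob (\sum_(k < n) F k) B = \sum_(k < n) frob (F k) B.
Proof. by rewrite /frob adj_sum mulmx_suml raddf_sum. Qed.

Lemma frob_norm2E A : frob_norm2 A = \sum_i \sum_k normc (A k i) ^+ 2.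
Proof.
rewrite /frob_norm2 frobE raddf_sum; apply: eq_bigr => i _ /=.
by rewrite raddf_sum; apply: eq_bigr => k _; rewrite conjc_mul_normc.
Qed.

Lemma frob_normE A : frob A A = (frob_norm2 A)%:C.
Proof.
rewrite frob_norm2E frobE rmorph_sum; apply: eq_bigr => i _.
by rewrite rmorph_sum; apply: eq_bigr => k _; rewrite conjc_mul_normc.
Qed.

Lemma frob_norm2_ge0 A : 0 <= frob_norm2 A.
Proof. by rewrite frob_norm2E; do 2!apply: sumr_ge0 => ? _; exact: sqr_ge0. Qed.

Lemma frob_norm2_eq0 A : frob_norm2 A = 0 -> A = 0.
Proof.
have entry_ge0 k i : 0 <= normc (A k i) ^+ 2 by exact: sqr_ge0.
rewrite frob_norm2E => /(psumr_eq0P (fun i _ => sumr_ge0 _ (fun k _ => entry_ge0 k i))) col0.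
apply/matrixP => k i; move: (col0 i isT) => /(psumr_eq0P (fun k _ => entry_ge0 k i)).
by move=> /(_ k isT) /eqP; rewrite sqrf_eq0 mxE => /eqP /eq0_normc.
Qed.

End Frobenius.

Lemma ler_sum_ord {R : numDomainType} n (F : 'I_n -> R) c : (forall i, F i <= c) -> \sum_i F i <= c *+ n.
Proof. by move=> Fc; rewrite -[in leRHS](card_ord n) -sumr_const; exact: ler_sum. Qed.

Section FrobeniusBounds.
Context {R : realType} {p : nat}.
Implicit Types (A B Z P : 'M[R[i]]_p).

Lemma normc_mulmx_le A B i k : normc ((A *m B) i k) <= \sum_l normc (A i l) * normc (B l k).
Proof.
rewrite mxE; apply: le_trans (ler_normc_sum _) _.
by apply: ler_sum => l _; rewrite normcM.
Qed.

Lemma normc_frob_le A B : normc (frob A B) <= \sum_i \sum_k normc (A k i) * normc (B k i).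
Proof.
rewrite frobE; apply: le_trans (ler_normc_sum _) _; apply: ler_sum => i _.
apply: le_trans (ler_normc_sum _) _; apply: ler_sum => k _.
by rewrite normcM normc_conj.
Qed.

Lemma sqr_normc_le_frob A i k : normc (A i k) ^+ 2 <= frob_norm2 A.
Proof.
rewrite frob_norm2E (bigD1 k) //= (bigD1 i) //= -addrA lerDl.
by rewrite addr_ge0 // sumr_ge0 // => *; rewrite ?sumr_ge0 // => *; exact: sqr_ge0.
Qed.

Lemma normc_mul_le_frob A i k i' k' : normc (A i k) * normc (A i' k') <= frob_norm2 A.
Proof.
have := sqr_normc_le_frob A i k; have := sqr_normc_le_frob A i' k'.
have := sqr_ge0 (normc (A i k) - normc (A i' k')); rewrite sqrrB; lra.
Qed.

Lemma normc_frob_defect_le Z P K : (forall a b, normc (P a b) <= K) ->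
  normc (frob Z (Z *m P + adj P *m Z)) <= (p ^ 3)%:R * (2 * K * frob_norm2 Z).
Proof.
move=> PK; apply: le_trans (normc_frob_le _ _) _.
rewrite mulr_natl !expnS expn0 muln1 !mulrnA; apply: ler_sum_ord => i; apply: ler_sum_ord => k.
have K0 : 0 <= K := le_trans (normc_ge0 _) (PK i i).
apply: le_trans (_ : _ <= normc (Z k i) * \sum_l (normc (Z k l) * K + K * normc (Z l i))) _.
  rewrite ler_wpM2l ?normc_ge0 // [X in normc X]mxE big_split /=.
  apply: le_trans (le_normcD _ _) (lerD _ _); apply: le_trans (normc_mulmx_le _ _ _ _) _;
    apply: ler_sum => l _; rewrite ?ler_wpM2l ?ler_wpM2r ?normc_ge0 //.
  by rewrite adjE normc_conj.
rewrite mulr_sumr; apply: ler_sum_ord => l.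
have := ler_wpM2l K0 (normc_mul_le_frob Z k i k l).
have := ler_wpM2l K0 (normc_mul_le_frob Z k i l i).
lra.
Qed.

Lemma Re_deriv_frob_defect_le Z P K : (forall a b, normc (P a b) <= K) ->
  complex.Re (frob (- (Z *m P + adj P *m Z)) Z + frob Z (- (Z *m P + adj P *m Z)))
    <= (p ^ 3)%:R * (4 * K * frob_norm2 Z).
Proof.
move=> /(normc_frob_defect_le Z) bound.
rewrite frobNl frobNr -frobJ raddfD /= !raddfN /= Re_conjc.
have : - complex.Re (frob Z (Z *m P + adj P *m Z)) <= normc (frob Z (Z *m P + adj P *m Z)).
  by apply: le_trans (ler_norm _) _; rewrite normrN normc_ge_absRe.
lra.
Qed.

End FrobeniusBounds.

Section MatrixDerivative.
Context {R : realType} {p : nat}.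
Implicit Types X Y : R -> 'M[R[i]]_p.

Lemma mx_deriv_cst (A : 'M[R[i]]_p) t : mx_deriv (fun=> A) t 0.
Proof. by move=> a b; rewrite mxE; exact: cderiv_cst. Qed.

Lemma mx_derivB X Y t DX DY : mx_deriv X t DX -> mx_deriv Y t DY ->
  mx_deriv (fun s => X s - Y s) t (DX - DY).
Proof.
move=> dX dY a b; under eq_fun do rewrite !mxE.
by rewrite !mxE; exact: cderivB.
Qed.

Lemma mx_derivM X Y t DX DY : mx_deriv X t DX -> mx_deriv Y t DY ->
  mx_deriv (fun s => X s *m Y s) t (DX *m Y t + X t *m DY).
Proof.
move=> dX dY a b; under eq_fun do rewrite !mxE.
rewrite !mxE -big_split; apply: cderiv_sum => k /=.
exact: cderivM.
Qed.

Lemma mx_deriv_adj X t DX : mx_deriv X t DX -> mx_deriv (fun s => adj (X s)) t (adj DX).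
Proof. by move=> dX a b; under eq_fun do rewrite adjE; rewrite adjE; exact: cderivJ. Qed.

Lemma cderiv_frob X Y t DX DY : mx_deriv X t DX -> mx_deriv Y t DY ->
  cderiv (fun s => frob (X s) (Y s)) t (frob DX (Y t) + frob (X t) DY).
Proof.
move=> dX dY; rewrite /frob -mxtraceD; apply: cderiv_sum => k.
exact: (mx_derivM (mx_deriv_adj dX) dY k k).
Qed.

End MatrixDerivative.

Section MatrixContinuity.
Context {R : realType} {T : topologicalType} {p : nat}.
Implicit Types X Y : T -> 'M[R[i]]_p.

Definition mx_continuous X := forall a b, ccontinuous (fun s => X s a b).

Lemma mx_continuous_cst (A : 'M[R[i]]_p) : mx_continuous (fun=> A).
Proof. by move=> a b; exact: ccontinuous_cst. Qed.

Lemma mx_continuousB X Y : mx_continuous X -> mx_continuous Y ->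
  mx_continuous (fun s => X s - Y s).
Proof. by move=> cX cY a b; under eq_fun do rewrite !mxE; exact: ccontinuousB. Qed.

Lemma mx_continuousZ (f : T -> R[i]) X : ccontinuous f -> mx_continuous X ->
  mx_continuous (fun s => f s *: X s).
Proof. by move=> cf cX a b; under eq_fun do rewrite !mxE; exact: ccontinuousM. Qed.

Lemma mx_continuous_sum n (F : 'I_n -> T -> 'M[R[i]]_p) :
  (forall k, mx_continuous (F k)) -> mx_continuous (fun s => \sum_(k < n) F k s).
Proof.
by move=> cF a b; under eq_fun do rewrite summxE; apply: ccontinuous_sum => k; exact: cF.
Qed.

Lemma mx_continuousM X Y : mx_continuous X -> mx_continuous Y ->
  mx_continuous (fun s => X s *m Y s).
Proof.
move=> cX cY a b; under eq_fun do rewrite mxE.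
by apply: ccontinuous_sum => k; exact: ccontinuousM.
Qed.

Lemma mx_continuous_adj X : mx_continuous X -> mx_continuous (fun s => adj (X s)).
Proof. by move=> cX a b; under eq_fun do rewrite adjE; exact: ccontinuousJ. Qed.

Lemma ccontinuous_frob X Y : mx_continuous X -> mx_continuous Y ->
  ccontinuous (fun s => frob (X s) (Y s)).
Proof.
by move=> cX cY; apply: ccontinuous_sum => k; exact: (mx_continuousM (mx_continuous_adj cX) cY k k).
Qed.

End MatrixContinuity.

Lemma mx_cont_nonneg_segment {R : realType} p (A : R -> 'M[R[i]]_p) (t : R) :
  mx_cont_nonneg A -> mx_continuous (T := subspace `[0, t]) A.
Proof.
have sub : `[0, t] `<=` `[0, +oo[ by move=> s; rewrite /= !in_itv /= => /andP[-> _].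
by move=> cA a b; have [cr ci] := cA a b; split; exact: continuous_subspaceW sub _.
Qed.

Definition unitary_defect {R : realType} p (A : 'M[R[i]]_p) := 1%:M - adj A *m A.

Definition coupling {R : realType} N p q
    (X : 'I_N -> R -> 'M[R[i]]_p) (Y : 'I_N -> R -> 'M[R[i]]_q) j t :=
  \sum_(k < N) frob (Y j t) (Y k t) *: X k t.

Section FlowAlgebra.
Context {R : realType} {p : nat}.
Implicit Types (A M : 'M[R[i]]_p) (c : R).

Local Notation flow c A M := (c%:C *: (M - A *m adj M *m A)).

Lemma unitary_defect_eq0 A : unitary_defect A = 0 <-> unitary A.
Proof. by rewrite /unitary /unitary_defect; split=> [/eqP|->]; rewrite ?subrr // subr_eq0 => /eqP. Qed.

Lemma frob_unitary_sandwich A M : unitary A ->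
  frob (A *m adj M *m A) (A *m adj M *m A) = frob M M.
Proof.
move=> uA; have uA' : A *m adj A = 1%:M by exact: mulmx1C.
rewrite /frob !adjM adjK !mulmxA -[adj A *m M *m adj A *m A]mulmxA uA mulmx1.
by rewrite mxtrace_mulC !mulmxA uA' mul1mx mxtrace_mulC.
Qed.

Lemma frob_flow_sym c A M : unitary A -> c != 0 ->
  frob (flow c A M) M + frob M (flow c A M) = (c^-1)%:C * frob (flow c A M) (flow c A M).
Proof.
move=> /(frob_unitary_sandwich M) eQM c0.
rewrite !frobZl !frobZr !frobBl !frobBr eQM conjc_real mulrA -rmorphM mulVf // mul1r.
by ring.
Qed.

Lemma adj_flow_defect c A M :
  adj (flow c A M) *m A + adj A *m flow c A M =
  unitary_defect A *m (c%:C *: (adj M *m A)) + adj (c%:C *: (adj M *m A)) *m unitary_defect A.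
Proof.
have unscaled : adj (M - A *m adj M *m A) *m A + adj A *m (M - A *m adj M *m A) =
    unitary_defect A *m (adj M *m A) + adj (adj M *m A) *m unitary_defect A.
  rewrite /unitary_defect !adjB !adjM !adjK !mulmxBl !mulmxBr !mul1mx !mulmx1 !mulmxA.
  move: (adj M *m A) (adj A *m M *m adj A *m A) (adj A *m M) (adj A *m A *m adj M *m A).
  by move=> a b d e; rewrite addrACA [RHS]addrACA [- e + _]addrC.
by rewrite !adj_scale conjc_real -!scalemxAl -!scalemxAr -!scalerDr unscaled.
Qed.

End FlowAlgebra.

Section Energy.
Context {R : realType} {N p q : nat} (kappa : R).
Implicit Types (X : 'I_N -> R -> 'M[R[i]]_p) (Y : 'I_N -> R -> 'M[R[i]]_q).

Lemma flow_rhsE X Y j t :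
  flow_rhs kappa X Y j t = (kappa / N%:R)%:C *:
    (coupling X Y j t - X j t *m adj (coupling X Y j t) *m X j t).
Proof.
rewrite /flow_rhs sumrB; congr (_ *: (_ - _)).
rewrite /coupling adj_sum mulmx_sumr mulmx_suml; apply: eq_bigr => k _.
by rewrite adj_scale frobJ -scalemxAr -scalemxAl.
Qed.

Lemma flow_dissipation X Y t : kappa / N%:R != 0 -> (forall j, unitary (X j t)) ->
  \sum_a \sum_b ((frob (flow_rhs kappa X Y a t) (X b t) + frob (X a t) (flow_rhs kappa X Y b t))
                 * frob (Y a t) (Y b t))
  = ((kappa / N%:R)^-1 * \sum_a frob_norm2 (flow_rhs kappa X Y a t))%:C.
Proof.
move=> c0 uX; set F := flow_rhs kappa X Y; set M := coupling X Y.
have eFM : \sum_a \sum_b frob (F a t) (X b t) * frob (Y a t) (Y b t)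
    = \sum_a frob (F a t) (M a t).
  apply: eq_bigr => a _; rewrite /M /coupling frob_sumr; apply: eq_bigr => b _.
  by rewrite frobZr mulrC.
have eMF : \sum_a \sum_b frob (X a t) (F b t) * frob (Y a t) (Y b t)
    = \sum_a frob (M a t) (F a t).
  rewrite exchange_big /=; apply: eq_bigr => b _; rewrite /M /coupling frob_suml.
  by apply: eq_bigr => a _; rewrite frobZl frobJ mulrC.
rewrite (eq_bigr (fun a => \sum_b frob (F a t) (X b t) * frob (Y a t) (Y b t)
    + \sum_b frob (X a t) (F b t) * frob (Y a t) (Y b t))); last first.
  by move=> a _; rewrite -big_split; apply: eq_bigr => b _; rewrite mulrDl.
rewrite big_split /= eFM eMF -big_split rmorphM rmorph_sum mulr_sumr.
apply: eq_bigr => a _ /=.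
by rewrite -frob_normE /F /M flow_rhsE (frob_flow_sym _ (uX a) c0).
Qed.

Lemma cderiv_energy X Y t DX DY :
  (forall j, mx_deriv (X j) t (DX j)) -> (forall j, mx_deriv (Y j) t (DY j)) ->
  cderiv (energy X Y) t
   (- ((1 / (N%:R ^+ 2))%:C *
      \sum_a \sum_b ((frob (DX a) (X b t) + frob (X a t) (DX b)) * frob (Y a t) (Y b t)
                    + frob (X a t) (X b t) * (frob (DY a) (Y b t) + frob (Y a t) (DY b))))).
Proof.
move=> dX dY; apply: cderiv_eq.
  apply: cderivB (cderiv_cst _ _) (cderivM (cderiv_cst _ _) _).
  apply: cderiv_sum => a; apply: cderiv_sum => b.
  exact: cderivM (cderiv_frob (dX a) (dX b)) (cderiv_frob (dY a) (dY b)).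
by rewrite /= mul0r !add0r.
Qed.

End Energy.

Section UnitaryInvariance.
Context {R : realType} {N p q : nat} (kappa : R).
Variables (X : 'I_N -> R -> 'M[R[i]]_p) (Y : 'I_N -> R -> 'M[R[i]]_q).
Hypotheses (X_cont : forall j, mx_cont_nonneg (X j)) (Y_cont : forall j, mx_cont_nonneg (Y j)).
Hypothesis X_deriv : forall s, 0 < s -> forall j, mx_deriv (X j) s (flow_rhs kappa X Y j s).

Let gain j s := (kappa / N%:R)%:C *: (adj (coupling X Y j s) *m X j s).
Let Z j s := unitary_defect (X j s).

Lemma mx_deriv_defect j s : 0 < s ->
  mx_deriv (Z j) s (- (Z j s *m gain j s + adj (gain j s) *m Z j s)).
Proof.
move=> s0; have dX := X_deriv s0 j.
have := mx_derivB (mx_deriv_cst 1%:M s) (mx_derivM (mx_deriv_adj dX) dX).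
by rewrite flow_rhsE adj_flow_defect sub0r.
Qed.

Lemma gain_bounded t : 0 <= t ->
  exists K, forall s, s \in `[0, t]%R -> forall j a b, normc (gain j s a b) <= K.
Proof.
move=> t0; have cX j := mx_cont_nonneg_segment t (X_cont j).
have cY j := mx_cont_nonneg_segment t (Y_cont j).
have cgain j : mx_continuous (T := subspace `[0, t]) (gain j).
  apply: mx_continuousZ (ccontinuous_cst _) (mx_continuousM (mx_continuous_adj _) (cX j)).
  by apply: mx_continuous_sum => k; exact: mx_continuousZ (ccontinuous_frob (cY j) (cY k)) (cX k).
have [K gainK] := segment_bounded
  (f := fun (i : 'I_N * 'I_p * 'I_p) s => normc (gain i.1.1 s i.1.2 i.2)) t0
  (fun i => continuous_normc (cgain _ _ _)).
by exists K => s st j a b; exact: (gainK (j, a, b) s st).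
Qed.

Lemma flow_unitary t : (forall j, unitary (X j 0)) -> 0 < t -> forall j, unitary (X j t).
Proof.
move=> X0 t0; have [K gainK] := gain_bounded (ltW t0).
pose Phi s := \sum_j frob_norm2 (Z j s).
have Phi_Re : Phi = fun s => complex.Re (\sum_j frob (Z j s) (Z j s)).
  by apply/funext => s; rewrite raddf_sum.
have Phi0 : Phi 0 = 0.
  apply: big1 => j _; rewrite /Z (proj2 (unitary_defect_eq0 _) (X0 j)).
  by rewrite /frob_norm2 /frob mulmx0 raddf0.
have Phi_cont : {within `[0, t], continuous Phi}.
  rewrite Phi_Re; have cX j := mx_cont_nonneg_segment t (X_cont j).
  have cZ j : mx_continuous (T := subspace `[0, t]) (Z j).
    rewrite /Z /unitary_defect.
    exact: mx_continuousB (mx_continuous_cst _) (mx_continuousM (mx_continuous_adj (cX j)) (cX j)).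
  by have [] := ccontinuous_sum (fun j => ccontinuous_frob (cZ j) (cZ j)).
pose W j s := - (Z j s *m gain j s + adj (gain j s) *m Z j s).
pose dPhi s := complex.Re (\sum_j (frob (W j s) (Z j s) + frob (Z j s) (W j s))).
have Phi_deriv s : s \in `]0, t[%R -> is_derive s 1 Phi (dPhi s).
  rewrite in_itv /= => /andP[s0 _]; rewrite Phi_Re.
  by have [] := cderiv_sum (fun j => cderiv_frob (mx_deriv_defect j s0) (mx_deriv_defect j s0)).
have Phi_growth s : s \in `]0, t[%R -> dPhi s <= (p ^ 3)%:R * (4 * K) * Phi s.
  move=> st; rewrite /dPhi raddf_sum /Phi mulr_sumr; apply: ler_sum => j _ /=.
  rewrite /W -mulrA; apply: Re_deriv_frob_defect_le => a b; apply: gainK.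
  by move: st; rewrite !in_itv /= => /andP[/ltW -> /ltW ->].
have PhiT := gronwall_le0 t0 Phi_cont Phi0 Phi_deriv Phi_growth.
have /psumr_eq0P Z0 : Phi t = 0.
  by apply/eqP; rewrite eq_le PhiT sumr_ge0 // => j _; exact: frob_norm2_ge0.
by move=> j; apply/unitary_defect_eq0/frob_norm2_eq0/Z0 => // k _; exact: frob_norm2_ge0.
Qed.

End UnitaryInvariance.

Theorem mainTheorem12 (R : realType) (N n m : nat) (kappa : R)
  (U : 'I_N -> R -> 'M[R[i]]_n) (V : 'I_N -> R -> 'M[R[i]]_m) :
  (0 < N)%N -> (0 < n)%N -> (0 < m)%N -> 0 < kappa ->
  (forall j, unitary (U j 0) /\ unitary (V j 0)) ->
  (forall j, mx_cont_nonneg (U j) /\ mx_cont_nonneg (V j)) ->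
  (forall t, 0 < t -> forall j,
      mx_deriv (U j) t (flow_rhs kappa U V j t) /\
      mx_deriv (V j) t (flow_rhs kappa V U j t)) ->
  forall t, 0 < t ->
    cderiv (energy U V) t
      ((- (1 / (kappa * N%:R)) *
        \sum_(j < N) (frob_norm2 (flow_rhs kappa U V j t)
                      + frob_norm2 (flow_rhs kappa V U j t)))%:C).
Proof.
move=> N0 _ _ kappa0 init cont flow t t0.
have uU := flow_unitary (fun j => (cont j).1) (fun j => (cont j).2)
  (fun s s0 j => (flow s s0 j).1) (fun j => (init j).1) t0.
have uV := flow_unitary (fun j => (cont j).2) (fun j => (cont j).1)
  (fun s s0 j => (flow s s0 j).2) (fun j => (init j).2) t0.
have N0' : N%:R != 0 :> R by rewrite pnatr_eq0 -lt0n.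
have c0 : kappa / N%:R != 0 by rewrite mulf_eq0 negb_or invr_eq0 N0' gt_eqF.
apply: cderiv_eq (cderiv_energy (fun j => (flow t t0 j).1) (fun j => (flow t t0 j).2)) _.
under eq_bigr do under eq_bigr do rewrite [frob (U _ t) _ * _]mulrC.
under eq_bigr do rewrite big_split /=.
rewrite big_split /= !flow_dissipation //.
rewrite -rmorphD -rmorphM -rmorphN big_split /=.
by congr (_%:C); field; rewrite N0' gt_eqF.
Qed.
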